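(* Let a group $G$ act uniformly equicontinuously on a cofinite graph $\Gamma$, let $\{R\mid R\in I\}$ be a fundamental system of $G$-invariant compatible cofinite entourages of $\Gamma$, and give $G$ the uniformity having $\{N_R\mid R\in I\}$ as a fundamental system of cofinite congruences. Then this uniformity on $G$ is Hausdorff if and only if $G$ acts faithfully on $\Gamma$.
   Context: A graph $\Gamma$ is a set $\Gamma=V(\Gamma)\sqcup E(\Gamma)$ with maps $s,t\colon E\to V$ and a fixed-point-free involution $e\mapsto\overline e$ with $s(\overline e)=t(e)$, $t(\overline e)=s(e)$. An equivalence relation $R$ on $\Gamma$ is compatible if $R\subseteq (V\times V)\cup(E\times E)$, $(e,e')\in R$ implies $(s(e),s(e')),(t(e),t(e')),(\overline e,\overline{e'})\in R$, and $(e,\overline e)\notin R$. A cofinite entourage is an entourage that is an equivalence relation with finitely many classes. A cofinite graph is a graph with a Hausdorff uniformity in which compatible cofinite entourages form a fundamental system. A group $G$ acts on $\Gamma$ if it acts on the set $\Gamma$ preserving vertices and edges, commuting with $s,t,\overline{\phantom e}$, and there is a $G$-invariant orientation. The action is uniformly equicontinuous if for each entourage $W$ there is an entourage $V$ with $(g\times g)[V]\subseteq W$ for all $g\in G$; such fundamental systems $\{R\}$ of $G$-invariant ($ (g\times g)[R]\subseteq R$ for all $g$) compatible cofinite entourages exist. $N_R=\{(g,h)\in G\times G:(g\cdot x,h\cdot x)\in R\ \forall x\in\Gamma\}$; these are cofinite congruences on $G$. The action is faithful if for every $g\neq 1$ there is $x\in\Gamma$ with $g\cdot x\ne x$. *)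

From Stdlib Require Import List.
Set Implicit Arguments.

Definition rel (X : Type) := X -> X -> Prop.

(* Gamma is the type X; isV x means x is a vertex, otherwise x is an edge.
   s, t, bar are total functions, only meaningful on edges. *)
Definition isE {X : Type} (isV : X -> Prop) (x : X) : Prop := ~ isV x.

Definition is_graph {X : Type} (isV : X -> Prop) (s t bar : X -> X) : Prop :=
  forall e, isE isV e ->
    isV (s e) /\ isV (t e) /\ isE isV (bar e) /\ bar (bar e) = e /\ bar e <> e /\
    s (bar e) = t e /\ t (bar e) = s e.

Definition rel_sub {X : Type} (R S : rel X) : Prop := forall x y, R x y -> S x y.
Definition rel_comp {X : Type} (R S : rel X) : rel X :=
  fun x z => exists y, R x y /\ S y z.

Definition is_uniformity {X : Type} (U : rel X -> Prop) : Prop :=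
  U (fun _ _ => True) /\
  (forall W W', U W -> rel_sub W W' -> U W') /\
  (forall W W', U W -> U W' -> U (fun x y => W x y /\ W' x y)) /\
  (forall W, U W -> forall x, W x x) /\
  (forall W, U W -> U (fun x y => W y x)) /\
  (forall W, U W -> exists V, U V /\ rel_sub (rel_comp V V) W).

Definition unif_hausdorff {X : Type} (U : rel X -> Prop) : Prop :=
  forall x y, (forall W, U W -> W x y) -> x = y.

Definition fundamental_system {X : Type} (U B : rel X -> Prop) : Prop :=
  (forall R, B R -> U R) /\ (forall W, U W -> exists R, B R /\ rel_sub R W).

Definition generated_uniformity {X : Type} (B : rel X -> Prop) : rel X -> Prop :=
  fun W => exists R, B R /\ rel_sub R W.

Definition is_equiv_rel {X : Type} (R : rel X) : Prop :=
  (forall x, R x x) /\ (forall x y, R x y -> R y x) /\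
  (forall x y z, R x y -> R y z -> R x z).

Definition cofinite_rel {X : Type} (R : rel X) : Prop :=
  is_equiv_rel R /\ exists l : list X, forall x, exists y, In y l /\ R x y.

Definition compatible {X : Type} (isV : X -> Prop) (s t bar : X -> X) (R : rel X) : Prop :=
  is_equiv_rel R /\
  (forall x y, R x y -> (isV x /\ isV y) \/ (isE isV x /\ isE isV y)) /\
  (forall e e', isE isV e -> isE isV e' -> R e e' ->
     R (s e) (s e') /\ R (t e) (t e') /\ R (bar e) (bar e')) /\
  (forall e, isE isV e -> ~ R e (bar e)).

Definition cofinite_graph {X : Type} (isV : X -> Prop) (s t bar : X -> X)
  (U : rel X -> Prop) : Prop :=
  is_graph isV s t bar /\ is_uniformity U /\ unif_hausdorff U /\
  fundamental_system U (fun R => U R /\ compatible isV s t bar R /\ cofinite_rel R).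

Definition is_group {G : Type} (mul : G -> G -> G) (one : G) (inv : G -> G) : Prop :=
  (forall a b c, mul a (mul b c) = mul (mul a b) c) /\
  (forall a, mul one a = a) /\ (forall a, mul a one = a) /\
  (forall a, mul (inv a) a = one) /\ (forall a, mul a (inv a) = one).

Definition orientation {X : Type} (isV : X -> Prop) (bar : X -> X) (O : X -> Prop) : Prop :=
  (forall e, O e -> isE isV e) /\
  (forall e, isE isV e -> (O e \/ O (bar e)) /\ ~ (O e /\ O (bar e))).

Definition graph_action {G X : Type} (mul : G -> G -> G) (one : G)
  (isV : X -> Prop) (s t bar : X -> X) (act : G -> X -> X) : Prop :=
  (forall x, act one x = x) /\
  (forall g h x, act (mul g h) x = act g (act h x)) /\
  (forall g x, isV (act g x) <-> isV x) /\
  (forall g e, isE isV e ->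
     s (act g e) = act g (s e) /\ t (act g e) = act g (t e) /\
     bar (act g e) = act g (bar e)) /\
  (exists O, orientation isV bar O /\ forall g e, O e -> O (act g e)).

Definition uniformly_equicontinuous {G X : Type} (U : rel X -> Prop)
  (act : G -> X -> X) : Prop :=
  forall W, U W -> exists V, U V /\ forall g x y, V x y -> W (act g x) (act g y).

Definition G_invariant {G X : Type} (act : G -> X -> X) (R : rel X) : Prop :=
  forall g x y, R x y -> R (act g x) (act g y).

Definition N_rel {G X : Type} (act : G -> X -> X) (R : rel X) : rel G :=
  fun g h => forall x, R (act g x) (act h x).

Definition faithful {G X : Type} (one : G) (act : G -> X -> X) : Prop :=
  forall g, g <> one -> exists x, act g x <> x.

From Stdlib Require Import Classical.
Set Implicit Arguments.

(* The base {N_R} relates g and h in every entourage iff g.x and h.x are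
   R-related for every R in I and every x; since I is a fundamental system of
   the Hausdorff uniformity of Gamma, this means g.x = h.x for all x, i.e.
   h^-1 g acts trivially.  So the uniformity on G separates points exactly
   when only 1 acts trivially. *)

Definition N_rel_system {G X : Type} (act : G -> X -> X) (I : rel X -> Prop)
  : rel G -> Prop :=
  fun NR => exists R, I R /\ NR = N_rel act R.

Lemma generated_uniformity_base {X : Type} (B : rel X -> Prop) (R : rel X) :
  B R -> generated_uniformity B R.
Proof. intros HR; exists R; split; [exact HR | intros x y Hxy; exact Hxy]. Qed.

Lemma eq_of_hausdorff_base {X : Type} (U B : rel X -> Prop) (x y : X) :
  unif_hausdorff U -> fundamental_system U B ->
  (forall R, B R -> R x y) -> x = y.
Proof.
  intros Hsep [_ Hbase] Hxy; apply Hsep; intros W HW.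
  destruct (Hbase W HW) as [R [HR HRW]].
  exact (HRW x y (Hxy R HR)).
Qed.

Section GroupAction.

Variables (G X : Type) (mul : G -> G -> G) (one : G) (inv : G -> G).
Variable act : G -> X -> X.
Hypothesis group : is_group mul one inv.
Hypothesis act_one : forall x, act one x = x.
Hypothesis act_mul : forall g h x, act (mul g h) x = act g (act h x).

Lemma eq_of_mulV_eq_one (g h : G) : mul (inv h) g = one -> g = h.
Proof.
  destruct group as [mulA [mul1g [mulg1 [_ mulgV]]]].
  intros E; rewrite <- (mul1g g), <- (mulgV h), <- mulA, E, mulg1; reflexivity.
Qed.

Lemma act_mulV_fixed (g h : G) (x : X) :
  act g x = act h x -> act (mul (inv h) g) x = x.
Proof.
  destruct group as [_ [_ [_ [mulVg _]]]].
  intros E; rewrite act_mul, E, <- act_mul, mulVg, act_one; reflexivity.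
Qed.

Lemma faithful_act_inj (g h : G) :
  faithful one act -> (forall x, act g x = act h x) -> g = h.
Proof.
  intros Hfaith Hgh; apply NNPP; intros Hne.
  assert (Hk : mul (inv h) g <> one) by (intros E; exact (Hne (eq_of_mulV_eq_one E))).
  destruct (Hfaith _ Hk) as [x Hx].
  exact (Hx (act_mulV_fixed (Hgh x))).
Qed.

Lemma N_rel_one_of_fixing (R : rel X) (g : G) :
  (forall x, R x x) -> (forall x, act g x = x) -> N_rel act R g one.
Proof. intros Hrefl Hfix x; rewrite Hfix, act_one; apply Hrefl. Qed.

Lemma faithful_of_N_rel_hausdorff (I : rel X -> Prop) :
  (forall R, I R -> forall x, R x x) ->
  unif_hausdorff (generated_uniformity (N_rel_system act I)) ->
  faithful one act.
Proof.
  intros Hrefl Hsep g Hg; apply NNPP; intros Hfix.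
  apply Hg, Hsep; intros W [NR [[R [HR ->]] HRW]].
  apply HRW, N_rel_one_of_fixing; [exact (Hrefl R HR) |].
  exact (not_ex_not_all _ _ Hfix).
Qed.

Lemma N_rel_hausdorff_of_faithful (U I : rel X -> Prop) :
  unif_hausdorff U -> fundamental_system U I -> faithful one act ->
  unif_hausdorff (generated_uniformity (N_rel_system act I)).
Proof.
  intros Hsep Hbase Hfaith g h Hgh.
  apply faithful_act_inj; [exact Hfaith |]; intros x.
  apply (eq_of_hausdorff_base Hsep Hbase); intros R HR.
  apply (Hgh (N_rel act R)), generated_uniformity_base.
  exists R; split; [exact HR | reflexivity].
Qed.

End GroupAction.

Theorem mainTheorem6
  (G X : Type) (mul : G -> G -> G) (one : G) (inv : G -> G)
  (isV : X -> Prop) (s t bar : X -> X) (U : rel X -> Prop)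
  (act : G -> X -> X) (I : rel X -> Prop)
  (HG : is_group mul one inv)
  (HGamma : cofinite_graph isV s t bar U)
  (Hact : graph_action mul one isV s t bar act)
  (Hequi : uniformly_equicontinuous U act)
  (HI : forall R, I R -> G_invariant act R /\ compatible isV s t bar R /\
                         cofinite_rel R /\ U R)
  (HIfund : fundamental_system U I) :
  unif_hausdorff (generated_uniformity (fun NR => exists R, I R /\ NR = N_rel act R))
  <-> faithful one act.
Proof.
  destruct Hact as [act_one [act_mul _]].
  destruct HGamma as [_ [_ [HUsep _]]].
  split.
  - apply (faithful_of_N_rel_hausdorff act_one).
    intros R HR; destruct (HI R HR) as [_ [[[R_refl _] _] _]]; exact R_refl.
  - exact (N_rel_hausdorff_of_faithful HG act_one act_mul HUsep HIfund).
Qed.
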